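(* Let $c=56^2$ and $c'=27$. Let $0<\epsilon\le\Delta\le1$, let $n\ge2$, and let $\tilde p$ be a probability distribution on $\{1,\dots,n\}$. Let $S=c(\Delta/\epsilon)^2\log n$ and let $\beta\le1$ satisfy $1-\beta\ge8\Delta$. Assume $\{1,\dots,n\}$ is partitioned into sets $H$ and $L$ with $\sum_{i\in L}\tilde p_i=1-\beta$, $\sum_{i\in H}\tilde p_i=\beta$, and $\sum_{i\in L}\tilde p_i^2\le (1-\beta)^2/S$. Let $v_1,\dots,v_{k_1}\in[-1,1]^n$ with $k_1=n^2$, and let $p_1,\dots,p_{k_2}$ be probability distributions on $\{1,\dots,n\}$ with $k_2\le n^{c'(\Delta/\epsilon)^2}$. Then there exists a probability distribution $\tilde p'$ on $\{1,\dots,n\}$ with $\mathrm{supp}(\tilde p')\subseteq\mathrm{supp}(\tilde p)$ such that: (1) $d(\tilde p,\tilde p')=3\Delta$; (2) $\tilde p'\cdot v_i\le\tilde p\cdot v_i+\epsilon$ for all $i\in\{1,\dots,k_1\}$; (3) $d(\tilde p',p_i)>d(\tilde p,p_i)-\Delta$ for all $i\in\{1,\dots,k_2\}$.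
   Context: $\mathrm{supp}(p)=\{i:p_i>0\}$. For distributions $p,p'$, $d(p,p')=\frac12\sum_i|p_i-p'_i|$ (variation distance). $\log$ is the natural logarithm. *)

From mathcomp Require Import all_boot all_order all_algebra.
From mathcomp Require Import reals exp.
Set Implicit Arguments. Unset Strict Implicit. Unset Printing Implicit Defensive.
Import Order.TTheory GRing.Theory Num.Theory.
Local Open Scope ring_scope.

Definition is_distr (R : realType) (n : nat) (p : 'I_n -> R) : Prop :=
  (forall i, 0 <= p i) /\ \sum_(i < n) p i = 1.

Definition supp_sub (R : realType) (n : nat) (p q : 'I_n -> R) : Prop :=
  forall i, 0 < p i -> 0 < q i.

Definition vdist (R : realType) (n : nat) (p q : 'I_n -> R) : R :=
  2^-1 * \sum_(i < n) `|p i - q i|.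

Definition dotp (R : realType) (n : nat) (p v : 'I_n -> R) : R :=
  \sum_(i < n) p i * v i.

From mathcomp Require Import all_boot all_order all_algebra.
From mathcomp Require Import reals exp sequences.
From mathcomp Require Import ring lra.
Set Implicit Arguments. Unset Strict Implicit. Unset Printing Implicit Defensive.
Import Order.TTheory GRing.Theory Num.Theory.
Local Open Scope ring_scope.

(* Let x be the part of pt supported on L, a sub-measure of pt of mass M = 1 - beta.
   For a sign vector s, [shifted pt x s Delta] moves mass 3 Delta inside x from the
   coordinates of sign -1 to those of sign +1, proportionally to x; it is at variation
   distance exactly 3 Delta from pt.  Its dot product with each v_a grows by at most eps,
   and its distance to each p_b drops by less than Delta, as soon as a few signed sums
   sum_i a_i s_i are small.  Because sum_i x_i^2 <= M^2/S, Hoeffding's bound shows that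
   each of these n^2 + 2 + k2 requirements fails for at most a fraction n^-4, resp.
   n^(-29 (Delta/eps)^2), of all sign vectors, so by a union bound some sign vector
   satisfies all of them. *)

Definition bsign {R : numDomainType} (b : bool) : R := if b then 1 else -1.

Lemma normr_bsign (R : numDomainType) (b : bool) : `|bsign b : R| = 1.
Proof. by case: b; rewrite /= ?normrN normr1. Qed.

Lemma sqr_bsign (R : numDomainType) (b : bool) : (bsign b : R) ^+ 2 = 1.
Proof. by case: b; rewrite /= ?sqrrN expr1n. Qed.

Section Hoeffding.
Variable R : realType.

Lemma expR_add_expRN_le_small (y : R) : `|y| <= 4^-1 ->
  expR y + expR (- y) <= 2 * expR (16/15 * y ^+ 2).
Proof.
rewrite ler_norml => /andP[y_ge y_le].
have expR_le_inv (z : R) : z < 1 -> expR z <= (1 - z)^-1.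
  move=> z_lt1; rewrite -div1r ler_pdivlMr ?subr_gt0 // mulrC.
  by have := ler_wpM2r (expR_ge0 z) (expR_ge1Dx (- z)); rewrite -expRD addNr expR0.
apply: le_trans (lerD (expR_le_inv y _) (expR_le_inv (- y) _)) _; try lra.
apply: le_trans (ler_wpM2l _ (expR_ge1Dx (16/15 * y ^+ 2))); last lra.
have -> : (1 - y)^-1 + (1 - - y)^-1 = 2 / ((1 - y) * (1 + y)).
  by field; rewrite !lt0r_neq0 //; lra.
have y_sq : y ^+ 2 <= 16^-1 by rewrite expr2; nra.
rewrite ler_pdivrMr; [nra | rewrite mulr_gt0 //; lra].
Qed.

(* The doubling identity e^{2z} + e^{-2z} = (e^z + e^{-z})^2 - 2 reduces to the
   case |y| <= 1/4. *)
Lemma expR_add_expRN_le (y : R) :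
  expR y + expR (- y) <= 2 * expR (16/15 * y ^+ 2).
Proof.
suff doubling (k : nat) (z : R) : `|z| <= 2 ^+ k / 4 ->
    expR z + expR (- z) <= 2 * expR (16/15 * z ^+ 2).
  apply: (doubling (Num.bound `|4 * y|)).
  have := archi_boundP (normr_ge0 (4 * y)); set m := Num.bound _ => ym.
  have m_le : (m%:R : R) <= 2 ^+ m.
    by rewrite -natrX ler_nat; apply/ltnW/ltn_expl.
  rewrite normrM (ger0_norm (_ : (0 : R) <= 4)) // in ym.
  rewrite ler_pdivlMr //; lra.
elim: k z => [|k IHk] z z_le; first by apply: expR_add_expRN_le_small; lra.
have half_le : `|z / 2| <= 2 ^+ k / 4.
  rewrite normrM (ger0_norm (_ : (0 : R) <= 2^-1)) ?invr_ge0 //.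
  by move: z_le; rewrite exprS; lra.
have IH := IHk _ half_le.
rewrite (_ : z = z / 2 * 2); last by field.
set u := z / 2 in IH *.
have -> : expR (u * 2) + expR (- (u * 2)) = (expR u + expR (- u)) ^+ 2 - 2.
  rewrite mulrC -mulrN !expRM_natl sqrrD -expRD addrN expR0; ring.
have -> : expR (16/15 * (u * 2) ^+ 2) = expR (16/15 * u ^+ 2) ^+ 4.
  by rewrite -expRM_natl; congr expR; ring.
set E := expR (16/15 * u ^+ 2) in IH *.
set c := expR u + expR (- u) in IH *.
have c_ge0 : 0 <= c by rewrite addr_ge0 ?expR_ge0.
have E_gt0 : 0 < E := expR_gt0 _.
have sq : c ^+ 2 <= 4 * E ^+ 2 by rewrite !expr2; nra.
have -> : E ^+ 4 = E ^+ 2 * E ^+ 2 by rewrite -exprD.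
have := sqr_ge0 (E ^+ 2 - 1); nra.
Qed.

(* Chernoff's method with lam = 15 t / (32 B) and the cosh bound above. *)
Lemma card_sign_sum_ge (n : nat) (a : 'I_n -> R) (B t : R) :
  0 < B -> 0 <= t -> \sum_(i < n) a i ^+ 2 <= B ->
  #|[set s : {ffun 'I_n -> bool} | t <= \sum_(i < n) a i * bsign (s i)]|%:R
    <= 2 ^+ n * expR (- (15/64) * t ^+ 2 / B).
Proof.
move=> B_gt0 t_ge0 aB.
pose lam := 15 * t / (32 * B).
have lam_ge0 : 0 <= lam by rewrite divr_ge0 ?mulr_ge0 // ltW.
pose F (s : {ffun 'I_n -> bool}) := \prod_(i < n) expR (lam * a i * bsign (s i)).
have markov : #|[set s : {ffun 'I_n -> bool} | t <= \sum_(i < n) a i * bsign (s i)]|%:R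
    <= \sum_s expR (- (lam * t)) * F s.
  rewrite -sumr_const big_mkcond /=; apply: ler_sum => s _.
  rewrite inE /F -expR_sum -expRD; case: ifP => [t_le|_]; last exact: expR_ge0.
  apply: le_trans (expR_ge1Dx _); rewrite lerDl.
  under eq_bigr do rewrite -mulrA.
  by rewrite -mulr_sumr -mulrN -mulrDr mulr_ge0 // addrC subr_ge0.
apply: (le_trans markov); rewrite -mulr_sumr /F.
rewrite -(bigA_distr_bigA (fun i b => expR (lam * a i * bsign b))) /=.
have cosh_prod : \prod_(i < n) \sum_(b : bool) expR (lam * a i * bsign b)
    <= \prod_(i < n) (2 * expR (16/15 * (lam * a i) ^+ 2)).
  apply: ler_prod => i _; rewrite sumr_ge0 => [|b _]; last exact: expR_ge0.
  by rewrite big_bool /= mulr1 mulrN1; apply: expR_add_expRN_le.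
apply: le_trans (ler_wpM2l (expR_ge0 _) cosh_prod) _.
rewrite big_split /= prodr_const card_ord -expR_sum mulrCA.
rewrite ler_wpM2l ?exprn_ge0 // -expRD ler_expR.
have -> : - (15/64) * t ^+ 2 / B = - (lam * t) + 16/15 * lam ^+ 2 * B.
  by rewrite /lam; field; apply: lt0r_neq0.
rewrite lerD2l; under eq_bigr do rewrite exprMn mulrA.
by rewrite -mulr_sumr ler_wpM2l //; apply: mulr_ge0; [lra | apply: sqr_ge0].
Qed.

Lemma exists_notin_cover (T I : finType) (E : I -> {set T}) :
  \sum_(j : I) (#|E j|%:R : R) < #|T|%:R -> exists s, forall j, s \notin E j.
Proof.
move=> card_lt; have [s /forallP | uncovered] := pickP [pred s | [forall j, s \notin E j]].
  by exists s.
suff : (#|T|%:R : R) <= \sum_j #|E j|%:R by rewrite leNgt card_lt.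
have cover s : 1 <= \sum_j (if s \in E j then 1 else 0 : R).
  move/negbT: (uncovered s); rewrite /= negb_forall => /existsP[j]; rewrite negbK => sE.
  by rewrite (bigD1 j) //= sE lerDl sumr_ge0 // => i _; case: ifP.
have -> : (#|T|%:R : R) = \sum_(s : T) 1 by rewrite sumr_const.
rewrite (le_trans (ler_sum _ (fun s _ => cover s))) // exchange_big /=.
by apply: ler_sum => j _; rewrite -big_mkcond sumr_const.
Qed.

Lemma exists_signs_sum_lt (n : nat) (I : finType) (a : I -> 'I_n -> R) (B t : I -> R) :
  (forall j, 0 < B j) -> (forall j, 0 <= t j) ->
  (forall j, \sum_(i < n) a j i ^+ 2 <= B j) ->
  \sum_j expR (- (15/64) * t j ^+ 2 / B j) < 1 ->
  exists s : {ffun 'I_n -> bool}, forall j, \sum_(i < n) a j i * bsign (s i) < t j.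
Proof.
move=> B_gt0 t_ge0 aB sum_lt1.
pose E j := [set s : {ffun 'I_n -> bool} | t j <= \sum_(i < n) a j i * bsign (s i)].
have [|s sE] := exists_notin_cover (E := E).
  rewrite card_ffun card_bool card_ord natrX.
  apply: le_lt_trans (ler_sum _ (fun j _ => card_sign_sum_ge (B_gt0 j) (t_ge0 j) (aB j))) _.
  by rewrite -mulr_sumr -[X in _ < X]mulr1 ltr_pM2l ?exprn_gt0.
by exists s => j; move: (sE j); rewrite inE -ltNge.
Qed.
End Hoeffding.

(* With M = sum_i x_i and w = sum_i x_i bsign (s i), the coordinates of sign +1 carry
   mass (M + w) / 2 of x and the others (M - w) / 2: scaling x by shift_coef moves mass
   3 D from the second group to the first. *)
Definition shift_coef {R : realFieldType} (D M w : R) (b : bool) : R :=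
  if b then 6 * D / (M + w) else - (6 * D / (M - w)).

Section ShiftCoef.
Variables (R : realFieldType) (D M w : R).
Hypotheses (D_gt0 : 0 < D) (w_lt : `|w| < M).

Let Mw_gt0 : 0 < M + w /\ 0 < M - w.
Proof. by move: w_lt; rewrite ltr_norml => /andP[? ?]; split; lra. Qed.

Local Notation a := (3 * D / (M + w)).
Local Notation g := (3 * D / (M - w)).

Lemma shift_coefE b : shift_coef D M w b = a - g + (a + g) * bsign b.
Proof. by case: Mw_gt0 b => ? ? [] /=; field; rewrite ?lt0r_neq0. Qed.

Lemma norm_shift_coef b : `|shift_coef D M w b| = a + g + (a - g) * bsign b.
Proof.
case: Mw_gt0 b => ? ? [] /=.
  by rewrite ger0_norm ?divr_ge0 ?ltW ?mulr_gt0 //; field; rewrite ?lt0r_neq0.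
by rewrite normrN ger0_norm ?divr_ge0 ?ltW ?mulr_gt0 //; field; rewrite ?lt0r_neq0.
Qed.

Lemma shift_coef_ge b : - (6 * D / (M - w)) <= shift_coef D M w b.
Proof.
case: Mw_gt0 b => ? ? [] //=.
by apply: (@le_trans _ _ 0); rewrite ?oppr_le0 divr_ge0 // ?mulr_ge0 // ltW.
Qed.

Lemma norm_shift_coef_dev b :
  `|shift_coef D M w b - 6 * D / M * bsign b| = `|w| / M * `|shift_coef D M w b|.
Proof.
have M_gt0 : 0 < M by apply: le_lt_trans w_lt.
have -> : shift_coef D M w b - 6 * D / M * bsign b = - (w / M) * shift_coef D M w b * bsign b.
  by case: Mw_gt0 b => ? ? [] /=; field; rewrite ?lt0r_neq0.
by rewrite !(normrM, normrN) normfV (gtr0_norm M_gt0) normr_bsign mulr1.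
Qed.

Variables (n : nat) (x : 'I_n -> R) (s : 'I_n -> bool).
Hypotheses (sum_x : \sum_i x i = M) (sum_xs : \sum_i x i * bsign (s i) = w).

Lemma sum_shift_coef_mul (f : 'I_n -> R) : \sum_i x i * shift_coef D M w (s i) * f i =
  (a - g) * \sum_i x i * f i + (a + g) * \sum_i x i * f i * bsign (s i).
Proof.
by rewrite !mulr_sumr -big_split; apply: eq_bigr => i _ /=; rewrite shift_coefE; ring.
Qed.

Lemma sum_shift_coef : \sum_i x i * shift_coef D M w (s i) = 0.
Proof.
rewrite (eq_bigr (fun i => (a - g) * x i + (a + g) * (x i * bsign (s i)))) => [|i _]; last first.
  by rewrite shift_coefE; ring.
rewrite big_split -!mulr_sumr sum_x sum_xs /=.
by case: Mw_gt0 => ? ?; field; rewrite ?lt0r_neq0.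
Qed.

Lemma sum_norm_shift_coef : \sum_i x i * `|shift_coef D M w (s i)| = 6 * D.
Proof.
rewrite (eq_bigr (fun i => (a + g) * x i + (a - g) * (x i * bsign (s i)))) => [|i _]; last first.
  by rewrite norm_shift_coef; ring.
rewrite big_split -!mulr_sumr sum_x sum_xs /=.
by case: Mw_gt0 => ? ?; field; rewrite ?lt0r_neq0.
Qed.
End ShiftCoef.

Section SignedGain.
Variable R : realFieldType.
Implicit Types (P Q y z : R).

(* Moving P by y * bsign b moves it away from Q by at least signed_gain P Q y * bsign b. *)
Definition signed_gain P Q y := (`|P + y - Q| - `|P - y - Q|) / 2.

Lemma norm_signed_gain_le P Q y : `|signed_gain P Q y| <= `|y|.
Proof.
rewrite /signed_gain normrM (ger0_norm (_ : (0 : R) <= 2^-1)) ?invr_ge0 //.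
have := ler_dist_dist (P + y - Q) (P - y - Q).
rewrite (_ : P + y - Q - (P - y - Q) = 2 * y); last by ring.
rewrite normrM (ger0_norm (_ : (0 : R) <= 2)) //; lra.
Qed.

Lemma norm_shift_ge P Q y z b :
  `|P - Q| + signed_gain P Q y * bsign b - `|z - y * bsign b| <= `|P + z - Q|.
Proof.
have moved : `|P + y * bsign b - Q| - `|z - y * bsign b| <= `|P + z - Q|.
  have := ler_normB (P + z - Q) (z - y * bsign b).
  by rewrite (_ : P + z - Q - (z - y * bsign b) = P + y * bsign b - Q) //; [lra | ring].
suff : `|P - Q| + signed_gain P Q y * bsign b <= `|P + y * bsign b - Q| by lra.
have mid : `|P - Q| <= (`|P + y - Q| + `|P - y - Q|) / 2.
  rewrite (_ : P - Q = ((P + y - Q) + (P - y - Q)) / 2); last by field.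
  rewrite normrM (ger0_norm (_ : (0 : R) <= 2^-1)) ?invr_ge0 //.
  have := ler_normD (P + y - Q) (P - y - Q); lra.
by rewrite /signed_gain; case: b {moved} mid => /=; rewrite ?mulr1 ?mulrN1; lra.
Qed.
End SignedGain.

Lemma tol_le (R : realFieldType) (eps D M : R) : 0 < eps -> eps <= D -> 0 <= M ->
  13 * (eps * M / (13 * D)) <= M.
Proof.
move=> eps_gt0 eps_le M_ge0; have D_gt0 : 0 < D := lt_le_trans eps_gt0 eps_le.
have -> : 13 * (eps * M / (13 * D)) = eps / D * M by field; rewrite lt0r_neq0.
by rewrite ler_piMl // ler_pdivrMr // mul1r.
Qed.

Lemma shift_dot_le (R : realFieldType) (eps D M w sv U : R) :
  0 < eps -> eps <= D -> 0 < M ->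
  `|w| < eps * M / (13 * D) -> U < eps * M / (13 * D) -> `|sv| <= M ->
  (3 * D / (M + w) - 3 * D / (M - w)) * sv + (3 * D / (M + w) + 3 * D / (M - w)) * U <= eps.
Proof.
move=> eps_gt0 eps_le M_gt0; set tau := _ / _ => w_lt U_lt sv_le.
have D_gt0 : 0 < D := lt_le_trans eps_gt0 eps_le.
have tauE : 13 * D * tau = eps * M by rewrite /tau; field; rewrite lt0r_neq0.
have tau_le : 13 * tau <= M by apply: tol_le => //; apply: ltW.
move: w_lt sv_le; rewrite ltr_norml ler_norml => /andP[w_ge w_le] /andP[sv_ge sv_le].
have -> : (3 * D / (M + w) - 3 * D / (M - w)) * sv + (3 * D / (M + w) + 3 * D / (M - w)) * U
    = 6 * D * (M * U - w * sv) / ((M + w) * (M - w)).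
  by field; rewrite !lt0r_neq0 //; lra.
have tau_gt0 : 0 < tau by rewrite divr_gt0 ?mulr_gt0.
rewrite ler_pdivrMr; last by rewrite mulr_gt0 //; lra.
have cross : M * U - w * sv <= 2 * tau * M by nra.
have w_sq : w * w <= M * M / 169.
  rewrite ler_pdivlMr //; nra.
apply: (le_trans (ler_wpM2l (_ : 0 <= 6 * D) cross)); first lra.
rewrite (_ : 6 * D * (2 * tau * M) = 12 / 13 * (13 * D * tau) * M); last by field.
rewrite tauE; nra.
Qed.

Definition shifted {R : realType} {n : nat} (pt x : 'I_n -> R) (s : 'I_n -> bool) (D : R) :
    'I_n -> R :=
  fun i => pt i + x i * shift_coef D (\sum_j x j) (\sum_j x j * bsign (s j)) (s i).

Section Shifted.
Variables (R : realType) (n : nat) (pt x : 'I_n -> R) (s : 'I_n -> bool) (eps D M : R).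
Hypotheses (eps_gt0 : 0 < eps) (eps_le : eps <= D) (M_ge : 8 * D <= M).
Hypotheses (pt_distr : is_distr pt) (x_ge0 : forall i, 0 <= x i) (x_le : forall i, x i <= pt i).
Hypothesis sum_x : \sum_i x i = M.
Local Notation w := (\sum_i x i * bsign (s i)).
Local Notation tau := (eps * M / (13 * D)).
Hypothesis w_lt : `|w| < tau.

Let D_gt0 : 0 < D. Proof. exact: lt_le_trans eps_le. Qed.
Let M_gt0 : 0 < M. Proof. by apply: lt_le_trans M_ge; rewrite mulr_gt0. Qed.

Let tau_le : 13 * tau <= M. Proof. exact/tol_le/ltW. Qed.

Let w_lt_M : `|w| < M.
Proof.
apply: lt_le_trans w_lt _; have := tau_le; have := le_lt_trans (normr_ge0 w) w_lt; lra.
Qed.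

Lemma shiftedE i : shifted pt x s D i = pt i + x i * shift_coef D M w (s i).
Proof. by rewrite /shifted sum_x. Qed.

Lemma is_distr_shifted : is_distr (shifted pt x s D).
Proof.
case: pt_distr => pt_ge0 pt_sum1; split => [i|].
  have coef_ge : -1 <= shift_coef D M w (s i).
    apply: le_trans (shift_coef_ge D_gt0 w_lt_M _).
    have := D_gt0; have := M_ge; have := tau_le; move: w_lt; rewrite ltr_norml => /andP[_ w_le] *.
    by rewrite lerN2 ler_pdivrMr; lra.
  by rewrite shiftedE; have := x_le i; have := x_ge0 i; nra.
under eq_bigr do rewrite shiftedE.
by rewrite big_split /= pt_sum1 (sum_shift_coef D w_lt_M sum_x) // addr0.
Qed.

Lemma supp_sub_shifted : supp_sub (shifted pt x s D) pt.
Proof.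
case: pt_distr => pt_ge0 _ i; rewrite shiftedE => pos.
have := pt_ge0 i; rewrite le_eqVlt => /orP[/eqP pt0 | //].
have x0 : x i = 0 by apply/le_anti; rewrite x_ge0 pt0 x_le.
by move: pos; rewrite x0 -pt0 mul0r addr0 ltxx.
Qed.

Lemma vdist_shifted : vdist pt (shifted pt x s D) = 3 * D.
Proof.
rewrite /vdist (eq_bigr (fun i => x i * `|shift_coef D M w (s i)|)) => [|i _].
  by rewrite (sum_norm_shift_coef D_gt0 w_lt_M sum_x) //; field.
by rewrite shiftedE opprD addrA subrr add0r normrN normrM ger0_norm.
Qed.

Lemma dotp_shifted_le (v : 'I_n -> R) : (forall i, -1 <= v i <= 1) ->
  \sum_i x i * v i * bsign (s i) < tau ->
  dotp (shifted pt x s D) v <= dotp pt v + eps.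
Proof.
move=> v_bd dot_lt.
rewrite /dotp (eq_bigr (fun i => pt i * v i + x i * shift_coef D M w (s i) * v i)) => [|i _].
  rewrite big_split /= lerD2l (sum_shift_coef_mul D w_lt_M).
  apply: shift_dot_le => //.
  apply: le_trans (ler_norm_sum _ _ _) _; rewrite -sum_x; apply: ler_sum => i _.
  by rewrite normrM ger0_norm // ler_piMr // ler_norml.
by rewrite shiftedE; ring.
Qed.

Lemma vdist_shifted_gt (q : 'I_n -> R) :
  - (20 * D / 13) < \sum_i signed_gain (pt i) (q i) (x i * (6 * D / M)) * bsign (s i) ->
  vdist pt q - D < vdist (shifted pt x s D) q.
Proof.
move=> gain_gt.
have sum_le : \sum_i (`|pt i - q i|
      + signed_gain (pt i) (q i) (x i * (6 * D / M)) * bsign (s i)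
      - `|w| / M * (x i * `|shift_coef D M w (s i)|))
    <= \sum_i `|shifted pt x s D i - q i|.
  apply: ler_sum => i _; rewrite shiftedE.
  rewrite (_ : `|w| / M * _ = `|x i * shift_coef D M w (s i) - x i * (6 * D / M) * bsign (s i)|).
    exact: norm_shift_ge.
  by rewrite -[x i * _ * bsign _]mulrA -mulrBr normrM ger0_norm // (norm_shift_coef_dev D w_lt_M) mulrCA.
rewrite !big_split /= sumrN -mulr_sumr (sum_norm_shift_coef D_gt0 w_lt_M sum_x) // in sum_le.
have w_term : `|w| / M * (6 * D) < 6 * D / 13.
  rewrite [X in _ < X]mulrC ltr_pM2r ?mulr_gt0 // ltr_pdivrMr //.
  by apply: lt_le_trans w_lt _; have := tau_le; lra.
rewrite /vdist; have := D_gt0; lra.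
Qed.
End Shifted.

Lemma tol_exponent_le (R : realFieldType) (eps D M l : R) :
  0 < eps -> eps <= D -> 0 < M -> 0 < l ->
  - (15/64) * (eps * M / (13 * D)) ^+ 2 / (M ^+ 2 / (3136 * (D / eps) ^+ 2 * l)) <= - 4 * l.
Proof.
move=> eps_gt0 eps_le M_gt0 l_gt0; have D_gt0 : 0 < D := lt_le_trans eps_gt0 eps_le.
have -> : - (15/64) * (eps * M / (13 * D)) ^+ 2 / (M ^+ 2 / (3136 * (D / eps) ^+ 2 * l))
    = - (15/64 * (3136/169)) * l by field; rewrite !lt0r_neq0.
lra.
Qed.

Lemma gain_exponent_le (R : realFieldType) (eps D l : R) : 0 < eps -> eps <= D -> 0 < l ->
  - (15/64) * (20 * D / 13) ^+ 2 / (36 * D ^+ 2 / (3136 * (D / eps) ^+ 2 * l))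
    <= - 29 * (D / eps) ^+ 2 * l.
Proof.
move=> eps_gt0 eps_le l_gt0; have D_gt0 : 0 < D := lt_le_trans eps_gt0 eps_le.
have -> : - (15/64) * (20 * D / 13) ^+ 2 / (36 * D ^+ 2 / (3136 * (D / eps) ^+ 2 * l))
    = - (15/64 * (400/6084) * 3136) * ((D / eps) ^+ 2 * l) by field; rewrite !lt0r_neq0.
have := mulr_gt0 (exprn_gt0 2 (divr_gt0 D_gt0 eps_gt0)) l_gt0; lra.
Qed.

Lemma failure_sum_lt1 (R : realType) (n k2 : nat) (K c1 c2 : R) :
  (2 <= n)%N -> 1 <= K -> c1 <= - 4 * ln n%:R -> c2 <= - 29 * K * ln n%:R ->
  k2%:R <= expR (27 * K * ln n%:R) -> (2 + (n ^ 2)%:R) * expR c1 + k2%:R * expR c2 < 1.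
Proof.
move=> n_ge2 K_ge1 c1_le c2_le k2_le.
have n_ge2R : (2 : R) <= n%:R by rewrite ler_nat.
have l_gt0 : 0 < ln (n%:R : R) by apply: ln_gt0; lra.
set l := ln _ in l_gt0 c1_le c2_le k2_le.
have inv_n : expR (- l) = n%:R^-1 by rewrite expRN lnK // posrE; lra.
set y := n%:R^-1 in inv_n.
have y_gt0 : 0 < y by rewrite invr_gt0; lra.
have y_le : y <= 2^-1 by rewrite lef_pV2 ?posrE //; lra.
have e1_y4 : expR c1 <= y ^+ 4.
  by rewrite -inv_n -expRM_natl ler_expR mulrN -mulNr.
have n2_y4 : (n ^ 2)%:R * y ^+ 4 = y ^+ 2.
  by rewrite natrX (_ : 4 = 2 + 2)%N // exprD mulrA -exprMn mulfV ?expr1n ?mul1r //; lra.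
have k2_e2 : k2%:R * expR c2 <= y ^+ 2.
  apply: le_trans (ler_pM (ler0n _ _) (expR_ge0 _) k2_le (_ : _ <= expR (- 29 * K * l))) _.
    by rewrite ler_expR.
  by rewrite -expRD -inv_n -expRM_natl ler_expR; nra.
have y2_le : y ^+ 2 <= 4^-1 by rewrite expr2; nra.
have y4_le : y ^+ 4 <= y ^+ 2 * 4^-1.
  by rewrite (_ : 4 = 2 + 2)%N // exprD ler_wpM2l // exprn_ge0 // ltW.
have := expR_gt0 c1; have := ler0n R (n ^ 2); nra.
Qed.

Lemma exists_good_signs (R : realType) (n k2 : nat) (x : 'I_n -> R)
    (v : 'I_(n ^ 2) -> 'I_n -> R) (d : 'I_k2 -> 'I_n -> R) (eps D M : R) :
  (2 <= n)%N -> 0 < eps -> eps <= D -> 0 < M ->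
  \sum_i x i ^+ 2 <= M ^+ 2 / (3136 * (D / eps) ^+ 2 * ln n%:R) ->
  (forall a i, -1 <= v a i <= 1) ->
  (forall b i, `|d b i| <= 6 * D / M * x i) ->
  k2%:R <= expR (27 * (D / eps) ^+ 2 * ln n%:R) ->
  exists s : {ffun 'I_n -> bool},
    [/\ `|\sum_i x i * bsign (s i)| < eps * M / (13 * D),
        forall a, \sum_i x i * v a i * bsign (s i) < eps * M / (13 * D) &
        forall b, - (20 * D / 13) < \sum_i d b i * bsign (s i)].
Proof.
move=> n_ge2 eps_gt0 eps_le M_gt0 x_sq v_bd d_bd k2_le.
have D_gt0 : 0 < D := lt_le_trans eps_gt0 eps_le.
have K_ge1 : 1 <= (D / eps) ^+ 2 by rewrite exprn_ege1 // ler_pdivlMr // mul1r.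
have l_gt0 : 0 < ln (n%:R : R) by apply: ln_gt0; rewrite ltr1n.
set S := 3136 * _ * _ in x_sq.
have S_gt0 : 0 < S by do 2 apply: mulr_gt0 => //; apply: lt_le_trans K_ge1.
(* One requirement per index: [inl (inl b)] bounds bsign b * w, [inl (inr c)] the
   signed sum of x * v c, and [inr b] the signed gain d b. *)
pose I := ((bool + 'I_(n ^ 2)) + 'I_k2)%type.
pose a (j : I) i := match j with
  | inl (inl b) => x i * bsign b | inl (inr c) => x i * v c i | inr b => - d b i end.
pose B (j : I) := if j is inl _ then M ^+ 2 / S else 36 * D ^+ 2 / S.
pose t (j : I) := if j is inl _ then eps * M / (13 * D) else 20 * D / 13.
have B_gt0 j : 0 < B j by case: j => ?; rewrite /B divr_gt0 // ?mulr_gt0 ?exprn_gt0.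
have t_ge0 j : 0 <= t j by case: j => ?; rewrite /t ?divr_ge0 ?mulr_ge0 // ltW.
have a_sq j : \sum_i a j i ^+ 2 <= B j.
  case: j => [[b|c]|b]; rewrite /a /B.
  + by under eq_bigr do rewrite exprMn sqr_bsign mulr1.
  + apply: le_trans x_sq; apply: ler_sum => i _; rewrite exprMn ler_piMr ?sqr_ge0 //.
    by have /andP[? ?] := v_bd c i; rewrite expr2; nra.
  + rewrite (_ : 36 * D ^+ 2 / S = (6 * D / M) ^+ 2 * (M ^+ 2 / S)); last by field; lra.
    apply: le_trans (ler_wpM2l (sqr_ge0 _) x_sq); rewrite mulr_sumr; apply: ler_sum => i _.
    rewrite sqrrN -exprMn -(real_normK (num_real (d b i))).
    by have := d_bd b i; have := normr_ge0 (d b i); nra.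
have sum_lt1 : \sum_j expR (- (15/64) * t j ^+ 2 / B j) < 1.
  rewrite !big_sumType big_bool /= !sumr_const !card_ord /S.
  have := failure_sum_lt1 n_ge2 K_ge1 (tol_exponent_le eps_gt0 eps_le M_gt0 l_gt0)
    (gain_exponent_le eps_gt0 eps_le l_gt0) k2_le.
  by rewrite -[expR _ *+ (n ^ 2)]mulr_natl -[expR _ *+ k2]mulr_natl; lra.
have [s small] := exists_signs_sum_lt B_gt0 t_ge0 a_sq sum_lt1.
exists s; split => [|c|b]; last 2 first.
- exact: small (inl (inr c)).
- have := small (inr b); rewrite /= ltrNl -sumrN.
  by under eq_bigr do rewrite mulNr.
have pos := small (inl (inl true)); have neg := small (inl (inl false)).
rewrite /= (eq_bigr (fun i => x i * bsign (s i))) in pos => [|i _]; last by rewrite mulr1.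
rewrite /= (eq_bigr (fun i => - (x i * bsign (s i)))) ?sumrN in neg => [|i _].
  by rewrite ltr_norml pos andbT ltrNl.
by rewrite mulrN1 mulNr.
Qed.

Lemma exists_shifted_distr (R : realType) (n k2 : nat) (pt x : 'I_n -> R)
    (v : 'I_(n ^ 2) -> 'I_n -> R) (q : 'I_k2 -> 'I_n -> R) (eps D M : R) :
  (2 <= n)%N -> 0 < eps -> eps <= D -> 8 * D <= M -> is_distr pt ->
  (forall i, 0 <= x i) -> (forall i, x i <= pt i) -> \sum_i x i = M ->
  \sum_i x i ^+ 2 <= M ^+ 2 / (3136 * (D / eps) ^+ 2 * ln n%:R) ->
  (forall a i, -1 <= v a i <= 1) ->
  k2%:R <= expR (27 * (D / eps) ^+ 2 * ln n%:R) ->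
  exists pt' : 'I_n -> R,
    [/\ is_distr pt', supp_sub pt' pt, vdist pt pt' = 3 * D,
        forall a, dotp pt' (v a) <= dotp pt (v a) + eps &
        forall b, vdist pt (q b) - D < vdist pt' (q b)].
Proof.
move=> n_ge2 eps_gt0 eps_le M_ge pt_distr x_ge0 x_le sum_x x_sq v_bd k2_le.
have D_gt0 : 0 < D := lt_le_trans eps_gt0 eps_le.
have M_gt0 : 0 < M by apply: lt_le_trans M_ge; rewrite mulr_gt0.
pose gain b i := signed_gain (pt i) (q b i) (x i * (6 * D / M)).
have gain_le b i : `|gain b i| <= 6 * D / M * x i.
  apply: le_trans (norm_signed_gain_le _ _ _) _.
  by rewrite mulrC ger0_norm // mulr_ge0 // divr_ge0 ?mulr_ge0 // ltW.
have [s [w_lt dot_lt gain_gt]] :=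
  exists_good_signs n_ge2 eps_gt0 eps_le M_gt0 x_sq v_bd gain_le k2_le.
exists (shifted pt x s D); split.
- exact: is_distr_shifted eps_gt0 eps_le M_ge pt_distr x_ge0 x_le sum_x w_lt.
- exact: supp_sub_shifted pt_distr x_ge0 x_le sum_x.
- exact: vdist_shifted eps_gt0 eps_le M_ge x_ge0 sum_x w_lt.
- by move=> a; apply: dotp_shifted_le eps_gt0 eps_le M_ge x_ge0 sum_x w_lt _ (v_bd a) (dot_lt a).
- by move=> b; apply: vdist_shifted_gt eps_gt0 eps_le M_ge x_ge0 sum_x w_lt _ (gain_gt b).
Qed.

Theorem lemma1 (R : realType) (eps Delta beta : R) (n : nat)
  (pt : 'I_n -> R) (H L : {set 'I_n})
  (v : 'I_(n ^ 2) -> 'I_n -> R) (k2 : nat) (p : 'I_k2 -> 'I_n -> R) :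
  0 < eps -> eps <= Delta -> Delta <= 1 -> (2 <= n)%N ->
  is_distr pt ->
  beta <= 1 -> 1 - beta >= 8 * Delta ->
  [disjoint H & L] -> H :|: L = [set: 'I_n] ->
  \sum_(i in L) pt i = 1 - beta ->
  \sum_(i in H) pt i = beta ->
  \sum_(i in L) pt i ^+ 2 <=
    (1 - beta) ^+ 2 / ((56 ^ 2)%:R * (Delta / eps) ^+ 2 * ln (n%:R)) ->
  (forall a j, -1 <= v a j <= 1) ->
  (forall b, is_distr (p b)) ->
  k2%:R <= powR (n%:R) (27%:R * (Delta / eps) ^+ 2) ->
  exists pt' : 'I_n -> R,
    [/\ is_distr pt', supp_sub pt' pt,
        vdist pt pt' = 3 * Delta,
        (forall a, dotp pt' (v a) <= dotp pt (v a) + eps) &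
        (forall b, vdist pt' (p b) > vdist pt (p b) - Delta)].
Proof.
move=> eps_gt0 eps_le _ n_ge2 pt_distr _ M_ge _ _ sum_L _ sum_L2 v_bd _ k2_le.
pose x i := if i \in L then pt i else 0.
have x_ge0 i : 0 <= x i by rewrite /x; case: ifP => // _; case: pt_distr.
have x_le i : x i <= pt i by rewrite /x; case: ifP => // _; case: pt_distr.
have sum_x : \sum_i x i = 1 - beta by rewrite -sum_L [RHS]big_mkcond.
have x_sq : \sum_i x i ^+ 2 <= (1 - beta) ^+ 2 / (3136 * (Delta / eps) ^+ 2 * ln n%:R).
  rewrite (_ : (56 ^ 2)%:R = 3136 :> R) in sum_L2; last by rewrite natrX.
  apply: le_trans sum_L2; rewrite [X in _ <= X]big_mkcond.
  by apply: ler_sum => i _; rewrite /x; case: ifP => // _; rewrite expr0n.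
have k2_le' : k2%:R <= expR (27 * (Delta / eps) ^+ 2 * ln n%:R).
  by move: k2_le; rewrite /powR gt_eqF // ltr0n; apply: leq_trans n_ge2.
have [pt' [? ? ? ? ?]] := exists_shifted_distr p n_ge2 eps_gt0 eps_le M_ge pt_distr
  x_ge0 x_le sum_x x_sq v_bd k2_le'.
by exists pt'; split.
Qed.
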